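(* Let $U=(U_{i,j})$ and $V=(V_{j,k})$ be unitaries on qubits $q_1,\dots,q_n$ (indices in $\{0,1\}^n$). Introduce two copies $q'_1,\dots,q'_n$ and $q''_1,\dots,q''_n$ of the qubit variables, and let $\mu(U)=\sum_{i,j\in\{0,1\}^n}U_{i,j}\,q^{i}q'^{j}$ (an expression over $q_1,\dots,q_n,q'_1,\dots,q'_n$) and $\mu(V)=\sum_{j,k\in\{0,1\}^n}V_{j,k}\,q'^{j}q''^{k}$ (an expression over $q'_1,\dots,q'_n,q''_1,\dots,q''_n$). Then $$\exists q'_1,\dots,q'_n:\ \mu(U)\cdot\mu(V)\ \equiv\ \sum_{i,k\in\{0,1\}^n}(UV)_{i,k}\,q^{i}q''^{k},$$ i.e. the left-hand side is the representation of the matrix product $UV$ over $q_1,\dots,q_n,q''_1,\dots,q''_n$.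
   Context: Qubit variables are treated as Boolean variables. Write $q^0=\overline{q}$, $q^1=q$, and for $i\in\{0,1\}^n$, $q^i=q_1^{i_1}\cdots q_n^{i_n}$ (similarly $q'^j$, $q''^k$). A complex-valued Boolean expression is a formal sum $\sum_r c_rf_r$ with $c_r\in\mathbb{C}$ and $f_r$ classical Boolean expressions, defining the function $F(f)(b)=\sum_{r:f_r(b)=1}c_r$. Product: $(\sum_rc_rf_r)\cdot(\sum_sd_sg_s)=\sum_{r,s}(c_rd_s)(f_r\wedge g_s)$. Existential quantification: $\exists x:\sum_rc_rf_r=\sum_rc_r(\exists x:f_r)$, where for a Boolean expression $h$, $\exists x:h=h_{x=0}\vee h_{x=1}$; several variables are quantified one after another. Two expressions are equivalent ($\equiv$) if they define the same function. *)

From HB Require Import structures.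
From mathcomp Require Import all_boot all_order all_algebra.
Set Implicit Arguments. Unset Strict Implicit. Unset Printing Implicit Defensive.
Import Order.TTheory GRing.Theory Num.Theory.
Local Open Scope ring_scope.

Definition bits (n : nat) := {ffun 'I_n -> bool}.

(* Qubit variables: copy c (0 = q, 1 = q', 2 = q'') of qubit l. *)
Definition qvar (n : nat) := ('I_3 * 'I_n)%type.
Definition assignment (n : nat) := qvar n -> bool.

(* A classical Boolean expression, represented by its semantics. *)
Definition bexpr (n : nat) := assignment n -> bool.

(* Complex-valued Boolean expression: formal sum sum_r c_r f_r. *)
Definition cbexpr (C : Type) (n : nat) := seq (C * bexpr n).

Definition cbeval (C : numClosedFieldType) n (f : cbexpr C n) (b : assignment n) : C :=
  \sum_(r <- f | r.2 b) r.1.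

Definition cbmul (C : numClosedFieldType) n (f g : cbexpr C n) : cbexpr C n :=
  [seq (r.1 * s.1, fun b => r.2 b && s.2 b) | r <- f, s <- g].

Definition assign_upd n (b : assignment n) (x : qvar n) (v : bool) : assignment n :=
  fun y => if y == x then v else b y.

Definition bexists n (x : qvar n) (h : bexpr n) : bexpr n :=
  fun b => h (assign_upd b x false) || h (assign_upd b x true).

Definition cbexists (C : numClosedFieldType) n (x : qvar n) (f : cbexpr C n) : cbexpr C n :=
  [seq (r.1, bexists x r.2) | r <- f].

Definition cbexists_seq (C : numClosedFieldType) n (xs : seq (qvar n)) (f : cbexpr C n)
  : cbexpr C n := foldl (fun g x => cbexists x g) f xs.

Definition cbequiv (C : numClosedFieldType) n (f g : cbexpr C n) : Prop :=
  forall b, cbeval f b = cbeval g b.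

Definition cq : 'I_3 := @Ordinal 3 0 isT.
Definition cq' : 'I_3 := @Ordinal 3 1 isT.
Definition cq'' : 'I_3 := @Ordinal 3 2 isT.

Definition mono n (c : 'I_3) (i : bits n) : bexpr n :=
  fun b => [forall l : 'I_n, b (c, l) == i l].

(* matrices on n qubits are indexed by bits n via enum_rank *)
Definition qmat (C : Type) n := 'M[C]_#|{: bits n}|.

Definition unitary (C : numClosedFieldType) n (U : qmat C n) : Prop :=
  U *m map_mx Num.conj U^T = 1%:M.

Definition mu (C : numClosedFieldType) n (c1 c2 : 'I_3) (M : qmat C n) : cbexpr C n :=
  [seq (M (enum_rank i) (enum_rank j), fun b => mono c1 i b && mono c2 j b)
  | i <- enum {: bits n}, j <- enum {: bits n}].

Definition primed_vars n : seq (qvar n) := [seq (cq', l) | l <- enum 'I_n].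

From mathcomp Require Import all_boot all_order all_algebra.
Set Implicit Arguments. Unset Strict Implicit. Unset Printing Implicit Defensive.
Import GRing.Theory.
Local Open Scope ring_scope.

(* Under an assignment b exactly one monomial q^i of a copy is true, namely
   the one whose exponent i is read off b; hence mu(M) evaluates to the entry
   of M whose row and column are read off b.  Quantifying away the primed copy
   in a product term q^i q'^j q'^j' q''^k asks for a value v of that copy with
   v = j and v = j', so it leaves q^i q''^k if j = j' and false otherwise;
   what remains of the sum is sum_j U_(i,j) V_(j,k) = (UV)_(i,k). *)

Definition read_copy n (b : assignment n) (c : 'I_3) : bits n := [ffun l => b (c, l)].

Lemma monoE n c (i : bits n) b : mono c i b = (i == read_copy b c).
Proof.
apply/forallP/eqP => [eq_bi | -> l]; last by rewrite ffunE.
by apply/ffunP => l; rewrite ffunE (eqP (eq_bi l)).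
Qed.

Lemma enum_index_enum (T : finType) : enum T = index_enum T.
Proof. by rewrite enumT [index_enum T]unlock. Qed.

Lemma sum_enum_rank (R : nmodType) (T : finType) (F : 'I_#|T| -> R) :
  \sum_(j < #|T|) F j = \sum_(t : T) F (enum_rank t).
Proof. by rewrite (reindex (@enum_rank T)) //; apply: onW_bij; exact: enum_rank_bij. Qed.

Lemma cbeval_mu (C : numClosedFieldType) n c1 c2 (M : qmat C n) b :
  cbeval (mu c1 c2 M) b =
  M (enum_rank (read_copy b c1)) (enum_rank (read_copy b c2)).
Proof.
rewrite /cbeval big_mkcond big_allpairs_dep enum_index_enum pair_bigA /=.
rewrite (bigD1 (read_copy b c1, read_copy b c2)) //= !monoE !eqxx /=.
rewrite big1 ?addr0 // => -[i j] /=; rewrite !monoE xpair_eqE.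
by case: andP => // -[/eqP-> /eqP->]; rewrite !eqxx.
Qed.

Definition bexists_seq n (xs : seq (qvar n)) (h : bexpr n) : bexpr n :=
  foldl (fun g x => bexists x g) h xs.

Lemma cbexists_seqE (C : numClosedFieldType) n xs (f : cbexpr C n) :
  cbexists_seq xs f = [seq (r.1, bexists_seq xs r.2) | r <- f].
Proof.
elim: xs f => [|x xs IHxs] f /=; first by rewrite -[LHS]map_id; apply: eq_map => -[].
by rewrite /cbexists_seq /= -/(cbexists_seq _ _) IHxs -map_comp.
Qed.

(* Quantification evaluates h at updated assignments, which are only pointwise
   equal to the ones we want: h must not distinguish pointwise equal functions. *)
Definition bexpr_extensional n (h : bexpr n) : Prop :=
  forall b b', b =1 b' -> h b = h b'.

Lemma bexists_extensional n x (h : bexpr n) :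
  bexpr_extensional h -> bexpr_extensional (bexists x h).
Proof.
move=> h_ext b b' eq_b; rewrite /bexists.
by congr (_ || _); apply: h_ext => y; rewrite /assign_upd eq_b.
Qed.

Lemma mono_extensional n c (i : bits n) : bexpr_extensional (mono c i).
Proof.
by move=> b b' eq_b; rewrite !monoE; congr (_ == _); apply/ffunP => l; rewrite !ffunE.
Qed.

Definition assign_copy n (b : assignment n) (c : 'I_3) (s : seq 'I_n) (v : bits n)
  : assignment n :=
  fun y => if (y.1 == c) && (y.2 \in s) then v y.2 else b y.

Lemma assign_upd_copy n (b : assignment n) c s v l w :
  assign_upd (assign_copy b c s v) (c, l) w
  =1 assign_copy b c (l :: s) [ffun l' => if l' == l then w else v l'].
Proof.
move=> [c' l']; rewrite /assign_upd /assign_copy xpair_eqE in_cons ffunE /=.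
by case: (c' == c); case: (l' == l).
Qed.

Lemma read_assign_copy_enum n (b : assignment n) c c' v :
  read_copy (assign_copy b c (enum 'I_n) v) c' =
  if c' == c then v else read_copy b c'.
Proof.
apply/ffunP => l; rewrite /assign_copy !ffunE mem_enum andbT.
by case: (c' == c); rewrite ?ffunE.
Qed.

Lemma bexists_seq_copy n (h : bexpr n) c s b :
  bexpr_extensional h ->
  bexists_seq [seq (c, l) | l <- s] h b = [exists v, h (assign_copy b c s v)].
Proof.
elim: s h => [|l s IHs] h h_ext /=.
  have copy_nil v : assign_copy b c [::] v =1 b.
    by move=> y; rewrite /assign_copy in_nil andbF.
  by apply/idP/existsP => [hb | [v]]; [exists [ffun=> false] | ];
    rewrite (h_ext _ _ (copy_nil _)).
rewrite IHs; last exact: bexists_extensional.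
have upd_h v w := h_ext _ _ (assign_upd_copy b c s v l w).
apply/existsP/existsP => -[v].
  by rewrite /bexists !upd_h => /orP[] hv; eexists; exact: hv.
move=> hv; exists v; rewrite /bexists !upd_h.
have v_upd : v = [ffun l' => if l' == l then v l else v l'].
  by apply/ffunP => l'; rewrite ffunE; case: eqP => [->|].
by move: hv; rewrite {1}v_upd; case: (v l) => ->; rewrite ?orbT.
Qed.

Lemma bexists_seq_contract n (c c1 c2 : 'I_3) (i j j' k : bits n) b :
  c1 != c -> c2 != c ->
  bexists_seq [seq (c, l) | l <- enum 'I_n]
    (fun b => (mono c1 i b && mono c j b) && (mono c j' b && mono c2 k b)) b =
  [&& mono c1 i b, mono c2 k b & j == j'].
Proof.
move=> /negbTE c1_c /negbTE c2_c.
rewrite bexists_seq_copy; last first.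
  by move=> b1 b2 eq_b; rewrite !(mono_extensional _ _ eq_b).
rewrite !monoE; apply/existsP/and3P => [[v] | [/eqP-> /eqP-> /eqP<-]].
  rewrite !monoE !read_assign_copy_enum c1_c c2_c eqxx.
  by case/and3P => /andP[-> /eqP->] /eqP-> ->; rewrite eqxx.
by exists j; rewrite !monoE !read_assign_copy_enum c1_c c2_c !eqxx.
Qed.

Lemma cbeval_exists_mul (C : numClosedFieldType) n xs (f g : cbexpr C n) b :
  cbeval (cbexists_seq xs (cbmul f g)) b =
  \sum_(r <- f) \sum_(s <- g)
    (if bexists_seq xs (fun b => r.2 b && s.2 b) b then r.1 * s.1 else 0).
Proof. by rewrite /cbeval cbexists_seqE big_map big_mkcond big_allpairs_dep. Qed.

Lemma sum_delta_contract (R : nmodType) (I J K : finType) (a : I) (c : K)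
    (F : I -> J -> J -> K -> R) :
  \sum_i \sum_j \sum_j' \sum_k
    (if [&& i == a, k == c & j == j'] then F i j j' k else 0) =
  \sum_j F a j j c.
Proof.
rewrite (bigD1 a) //= [X in _ + X]big1 ?addr0 => [|i /negbTE ne_ia]; last first.
  by do 3!(apply: big1 => ? _); rewrite ne_ia.
apply: eq_bigr => j _.
rewrite (bigD1 j) //= [X in _ + X]big1 ?addr0 => [|j' /negbTE ne_j'j]; last first.
  by apply: big1 => k _; rewrite [j == _]eq_sym ne_j'j !andbF.
rewrite (bigD1 c) //= [X in _ + X]big1 ?addr0 => [|k /negbTE ne_kc].
  by rewrite !eqxx.
by rewrite ne_kc andbF.
Qed.

Theorem theorem5 (C : numClosedFieldType) (n : nat) (U V : qmat C n) :
  unitary U -> unitary V ->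
  cbequiv (cbexists_seq (primed_vars n) (cbmul (mu cq cq' U) (mu cq' cq'' V)))
          (mu cq cq'' (U *m V)).
Proof.
move=> _ _ b; rewrite cbeval_mu cbeval_exists_mul /mu !big_allpairs_dep /=.
under eq_bigr => i _ do under eq_bigr => j _ do rewrite big_allpairs_dep /=.
under eq_bigr => i _ do under eq_bigr => j _ do under eq_bigr => j' _ do
  under eq_bigr => k _ do rewrite bexists_seq_contract // !monoE.
by rewrite enum_index_enum sum_delta_contract mxE sum_enum_rank.
Qed.
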